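(* Let $\mathcal{H}=(\mathcal{A},\Delta_{\mathcal{A}},S_{\mathcal{A}},\varepsilon_{\mathcal{A}})$ be a Hopf algebra over a field $k$, let $\mathcal{B},\mathcal{C}$ be unital $k$-algebras and $\Phi:\mathcal{A}\to\mathcal{B}$, $\Psi:\mathcal{A}\to\mathcal{C}$ surjective unital algebra homomorphisms. Then $\Psi$ and $\Phi$ cocommute, i.e. $(\Psi\otimes\Phi)\circ\Delta_{\mathcal{A}}=(\Psi\otimes\Phi)\circ\Delta_{\mathcal{A}}^{\mathrm{op}}$, if and only if \[(\Phi\otimes\Psi)(\mathrm{ad}(x))=\mathds{1}_{\mathcal{B}}\otimes\Psi(x)\quad\text{for all }x\in\mathcal{A}.\]
   Context: Sweedler notation $\Delta_{\mathcal{A}}(x)=x_{(1)}\otimes x_{(2)}$, $(\Delta_{\mathcal{A}}\otimes\mathrm{id})\Delta_{\mathcal{A}}(x)=x_{(1)}\otimes x_{(2)}\otimes x_{(3)}$. $\Delta_{\mathcal{A}}^{\mathrm{op}}=\sigma\circ\Delta_{\mathcal{A}}$ is the opposite comultiplication, $\Delta^{\mathrm{op}}_{\mathcal{A}}(x)=x_{(2)}\otimes x_{(1)}$. The adjoint coaction $\mathrm{ad}:\mathcal{A}\to\mathcal{A}\otimes\mathcal{A}$ is the linear map $\mathrm{ad}(x)=x_{(1)}S_{\mathcal{A}}(x_{(3)})\otimes x_{(2)}$. *)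

From HB Require Import structures.
From mathcomp Require Import all_boot all_order all_algebra.
Set Implicit Arguments. Unset Strict Implicit. Unset Printing Implicit Defensive.
Import Order.TTheory GRing.Theory Num.Theory.
Local Open Scope ring_scope.

(* Elements of the algebraic tensor product V (x) W of two K-vector spaces
   (K a field) are represented by finite formal sums  sum_i v_i (x) w_i,
   i.e. by sequences of pairs.  Two representatives denote the same tensor
   iff they agree under every product functional f (x) g with f in V*, g in
   W*  (over a field the image of V* (x) W* in (V (x) W)* separates points,
   so this is exactly equality in V (x) W). *)

Definition tensor2 (V W : Type) := seq (V * W).
Definition tensor3 (U V W : Type) := seq (U * V * W).

Definition teq (K : fieldType) (V W : lmodType K) (s t : tensor2 V W) : Prop :=
  forall (f : {linear V -> K^o}) (g : {linear W -> K^o}),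
    \sum_(p <- s) (f p.1 * g p.2 : K) = \sum_(p <- t) (f p.1 * g p.2 : K).

Definition teq3 (K : fieldType) (U V W : lmodType K) (s t : tensor3 U V W) : Prop :=
  forall (f : {linear U -> K^o}) (g : {linear V -> K^o}) (h : {linear W -> K^o}),
    \sum_(p <- s) (f p.1.1 * g p.1.2 * h p.2 : K)
    = \sum_(p <- t) (f p.1.1 * g p.1.2 * h p.2 : K).

Definition tmap (V W V' W' : Type) (f : V -> V') (g : W -> W') (t : tensor2 V W)
  : tensor2 V' W' := [seq (f p.1, g p.2) | p <- t].

Definition tflip (V W : Type) (t : tensor2 V W) : tensor2 W V :=
  [seq (p.2, p.1) | p <- t].

(* A Hopf algebra structure (Delta, S, epsilon) on a unital associative
   K-algebra A.  cop x is a representative of Delta(x) = x_(1) (x) x_(2). *)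
Record hopf_structure (K : fieldType) (A : algType K) := HopfStructure {
  cop : A -> tensor2 A A;
  cnt : A -> K;
  ant : A -> A;
  cop_linear : forall (a : K) (x y : A),
    teq (cop (a *: x + y)) ([seq (a *: p.1, p.2) | p <- cop x] ++ cop y);
  cop_mul : forall x y : A,
    teq (cop (x * y)) [seq (p.1 * q.1, p.2 * q.2) | p <- cop x, q <- cop y];
  cop_one : teq (cop 1) [:: (1, 1)];
  coassoc : forall x : A,
    teq3 [seq (q.1, q.2, p.2) | p <- cop x, q <- cop p.1]
         [seq (p.1, q.1, q.2) | p <- cop x, q <- cop p.2];
  cnt_linear : forall (a : K) (x y : A), cnt (a *: x + y) = a * cnt x + cnt y;
  cnt_mul : forall x y : A, cnt (x * y) = cnt x * cnt y;
  cnt_one : cnt 1 = 1;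
  counitl : forall x : A, \sum_(p <- cop x) cnt p.1 *: p.2 = x;
  counitr : forall x : A, \sum_(p <- cop x) cnt p.2 *: p.1 = x;
  ant_linear : forall (a : K) (x y : A), ant (a *: x + y) = a *: ant x + ant y;
  antl : forall x : A, \sum_(p <- cop x) ant p.1 * p.2 = cnt x *: 1;
  antr : forall x : A, \sum_(p <- cop x) p.1 * ant p.2 = cnt x *: 1
}.

(* adjoint coaction  ad(x) = x_(1) S(x_(3)) (x) x_(2), with
   x_(1) (x) x_(2) (x) x_(3) = (Delta (x) id) Delta (x). *)
Definition ad (K : fieldType) (A : algType K) (H : hopf_structure A) (x : A)
  : tensor2 A A :=
  [seq (q.1 * ant H p.2, q.2) | p <- cop H x, q <- cop H p.1].

(* If Psi and Phi cocommute, x_(1) and x_(2) may be swapped inside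
   ad(x) = x_(1) S(x_(3)) (x) x_(2); coassociativity then brings x_(2) S(x_(3))
   together, the antipode axiom turns it into epsilon, and the counit leaves
   1 (x) Psi(x).  Conversely, expanding x_(1) (x) x_(2) by the ad-condition for
   x_(1) and regrouping by coassociativity produces S(x_(2)) x_(3), and the
   other antipode axiom collapses everything to the flipped coproduct.

   These computations evaluate the coassociativity identity on forms such as
   a (x) b (x) c |-> g(Psi a) f(Phi (b S(c))), which are not products of
   functionals.  So one first shows that tensors agreeing under all product
   functionals agree under all multilinear forms, by Gaussian elimination on
   the last tensor factor; this needs that linear functionals separate points,
   which in infinite dimension is a Zorn argument. *)

From HB Require Import structures.
From mathcomp Require Import all_boot all_order all_algebra.
From mathcomp Require Import boolp classical_sets.
Import GRing.Theory.
Local Open Scope ring_scope.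
Set Implicit Arguments. Unset Strict Implicit.

Section LinearForms.
Variables (K : fieldType) (V : lmodType K).

Definition lform_of (f : V -> K) (fL : linear_for *%R f) : {linear V -> K^o} :=
  HB.pack (f : V -> K^o) (GRing.isLinear.Build K V K^o *:%R f fL).

Lemma lform_ofE f fL v : @lform_of f fL v = f v. Proof. by []. Qed.

Lemma lform_sum (f : V -> K) : linear_for *%R f ->
  forall (I : Type) (r : seq I) (x : I -> V), f (\sum_(i <- r) x i) = \sum_(i <- r) f (x i).
Proof. by move=> fL I r x; exact: (raddf_sum (lform_of fL)). Qed.

Lemma lform0 (f : V -> K) : linear_for *%R f -> f 0 = 0.
Proof. by move=> fL; exact: (linear0 (lform_of fL)). Qed.

Lemma lformZ (f : V -> K) : linear_for *%R f -> forall a v, f (a *: v) = a * f v.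
Proof. by move=> fL a v; exact: (linearZZ (lform_of fL)). Qed.

Lemma lform_comp (U : lmodType K) (f : {linear V -> K^o}) (l : {linear U -> V}) :
  linear_for *%R (fun u => f (l u)).
Proof. by move=> a x y; rewrite !linearP. Qed.

Lemma lform_mul_bilinear (W : lmodType K) (f : V -> K) (g : W -> K) :
  linear_for *%R f -> linear_for *%R g -> bilinear_for *%R *%R (fun v w => f v * g w).
Proof.
move=> fL gL; split=> [w|v] a x y /=; first by rewrite fL mulrDl mulrA.
by rewrite gL mulrDr mulrCA.
Qed.
End LinearForms.

Section DualSeparatesPoints.
Variables (K : fieldType) (W : lmodType K).
Local Open Scope classical_set_scope.

Definition lin_closed (M : set W) :=
  forall k x y, M x -> M y -> M (k *: x + y).

Lemma lincomb_subr a k l (x y v : W) :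
  a *: x + y - (a * k + l) *: v = a *: (x - k *: v) + (y - l *: v).
Proof. by rewrite scalerDl opprD addrACA scalerBr scalerA. Qed.

Lemma maximal_subspace_avoiding (w : W) : w != 0 ->
  exists M, lin_closed M /\ forall v, exists! k, M (v - k *: w).
Proof.
move=> w_neq0.
have [M [[Mcl Mw] Mmax]] :
    exists M, (lin_closed M /\ ~ M w) /\ forall N, M `<` N -> ~ (lin_closed N /\ ~ N w).
  apply: Zorn_bigcup => F FP Ftot; split.
  - move=> k x y [X FX Xx] [Y FY Yy].
    have [XY|YX] := Ftot _ _ FX FY.
      by exists Y => //; apply: (FP _ FY).1 => //; apply: XY.
    by exists X => //; apply: (FP _ FX).1 => //; apply: YX.
  - by move=> [X FX Xw]; apply: (FP _ FX).2.
have M0 : M 0.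
  apply: contrapT => M0; apply: (Mmax [set 0]).
    split=> [x Mx|]; first by have := Mcl (-1) x x Mx Mx; rewrite scaleN1r addNr.
    by move/(_ 0 erefl).
  split=> [k x y -> ->|w0]; first by rewrite scaler0 addr0.
  by move: w_neq0; rewrite w0 eqxx.
exists M; split=> // v.
have [k Mvk] : exists k, M (v - k *: w).
  apply: contrapT => nv; pose N x := exists k, M (x - k *: v).
  apply: (Mmax N); first split.
  - by move=> x Mx; exists 0; rewrite scale0r subr0.
  - move=> /(_ v) Mv; apply: nv; exists 0; rewrite scale0r subr0; apply: Mv.
    by exists 1; rewrite scale1r subrr.
  split=> [a x y [k Mx] [l My]|[k Mwk]].
    by exists (a * k + l); rewrite lincomb_subr; apply: Mcl.
  have [k0|k_neq0] := eqVneq k 0.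
    by apply: Mw; move: Mwk; rewrite k0 scale0r subr0.
  apply: nv; exists k^-1.
  have := Mcl (- k^-1) _ _ Mwk M0.
  by rewrite addr0 scalerBr scalerA mulNr mulVf // scaleN1r opprK scaleNr addrC.
exists k; split=> // l Mvl; apply: contrapT => /eqP; rewrite -subr_eq0 => lk_neq0.
have := Mcl (-1) _ _ Mvk Mvl; rewrite scaleN1r opprB addrA subrK -scalerBl => Mkl.
apply: Mw; have := Mcl (k - l)^-1 _ _ Mkl M0.
by rewrite addr0 scalerA mulVf // scale1r.
Qed.

Lemma exists_lform_eq1 (w : W) : w != 0 -> exists h : {linear W -> K^o}, h w = 1.
Proof.
move=> /maximal_subspace_avoiding[M [Mcl Mspan]].
(* h v is the coordinate of v along w in the decomposition K w + M. *)
pose h v := projT1 (cid (Mspan v)).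
have Mh v : M (v - h v *: w) by rewrite /h; case: (cid (Mspan v)) => k [].
have h_uniq v l : M (v - l *: w) -> h v = l.
  by rewrite /h; case: (cid (Mspan v)) => k /= [_ k_uniq]; apply: k_uniq.
have hL : linear_for *%R h.
  move=> a x y; apply: h_uniq.
  by rewrite lincomb_subr; apply: Mcl; apply: Mh.
exists (lform_of hL); rewrite lform_ofE; apply: h_uniq.
by have := Mcl (-1) _ _ (Mh w) (Mh w); rewrite scaleN1r addNr scale1r subrr.
Qed.

Lemma lform_separates (w : W) : (forall h : {linear W -> K^o}, h w = 0) -> w = 0.
Proof.
move=> hw0; have [//|/exists_lform_eq1[h h1]] := eqVneq w 0.
by have /eqP := hw0 h; rewrite h1 oner_eq0.
Qed.

End DualSeparatesPoints.

(* A block (qs, w) stands for the formal tensor sum_(q in qs) q (x) w.  To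
   show block_sum F S = 0, either the w of the first block is a combination of
   the later ones and the block is merged into them, or it is independent of
   them, and then every elementary functional kills the first block. *)
Section BlockElimination.
Variables (K : fieldType) (W : lmodType K) (Q : Type) (scaleQ : K -> Q -> Q).
Variables (elementary admissible : (Q -> K) -> Prop).
Hypothesis elementaryZ :
  forall phi, elementary phi -> forall k q, phi (scaleQ k q) = k * phi q.
Hypothesis elementary_detects : forall psi, admissible psi ->
  forall l : seq Q, (forall phi, elementary phi -> \sum_(q <- l) phi q = 0) ->
  \sum_(q <- l) psi q = 0.

Definition block_sum (F : Q -> W -> K) (S : seq (seq Q * W)) :=
  \sum_(s <- S) \sum_(q <- s.1) F q s.2.

Definition block_merge (c : seq Q * W -> K) (s0 : seq Q * W) S :=
  [seq (s.1 ++ [seq scaleQ (c s) q | q <- s0.1], s.2) | s <- S].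

Definition homogeneous (F : Q -> W -> K) :=
  forall k q w, F (scaleQ k q) w = k * F q w.

Lemma block_sum_merge F c s0 S :
  homogeneous F -> (forall q, linear_for *%R (F q)) ->
  s0.2 = \sum_(s <- S) c s *: s.2 ->
  block_sum F (s0 :: S) = block_sum F (block_merge c s0 S).
Proof.
move=> FZ FL s0E; rewrite /block_sum big_cons big_map.
under [RHS]eq_bigr => s _ do rewrite big_cat /= big_map.
rewrite big_split /= addrC; congr (_ + _).
under eq_bigr => q _ do rewrite s0E lform_sum //.
rewrite exchange_big /=; apply: eq_bigr => s _; apply: eq_bigr => q _.
by rewrite FZ lformZ.
Qed.

Let elementary_tensor_form phi (h : {linear W -> K^o}) :
  elementary phi -> homogeneous (fun q w => phi q * h w) /\
                    forall q, linear_for *%R (fun w => phi q * h w).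
Proof.
move=> phiE; split=> [k q w|q a x y]; first by rewrite elementaryZ // mulrA.
by rewrite linearP mulrDr mulrCA.
Qed.

Lemma block_head_elim phi s0 S :
  elementary phi ->
  (forall h : {linear W -> K^o}, block_sum (fun q w => phi q * h w) (s0 :: S) = 0) ->
  ~ (exists c, s0.2 = \sum_(s <- S) c s *: s.2) ->
  \sum_(q <- s0.1) phi q = 0.
Proof.
move=> phiE S0 s0_free; apply: contrapT => /eqP c0_neq0; apply: s0_free.
pose c (s : seq Q * W) := \sum_(q <- s.1) phi q.
have : \sum_(s <- s0 :: S) c s *: s.2 = 0.
  apply: lform_separates => h; rewrite linear_sum -[RHS](S0 h) /block_sum.
  by apply: eq_bigr => s _; rewrite linearZ; apply: mulr_suml.
rewrite big_cons => /eqP; rewrite addr_eq0 => /eqP s0E.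
exists (fun s => - c s / c s0); apply: (scalerI c0_neq0).
rewrite s0E scaler_sumr -sumrN; apply: eq_bigr => s _.
by rewrite scalerA mulrCA mulfV // mulr1 scaleNr.
Qed.

Lemma block_sum_eq0 F S :
  (forall phi, elementary phi -> forall h : {linear W -> K^o},
     block_sum (fun q w => phi q * h w) S = 0) ->
  (forall w, admissible (F^~ w)) -> homogeneous F ->
  (forall q, linear_for *%R (F q)) -> block_sum F S = 0.
Proof.
move=> S0 Fadm FZ FL; elim: {S}(size S) {-2}S (leqnn (size S)) S0 => [|n IH].
  by case=> // _ _; rewrite /block_sum big_nil.
case=> [|s0 S] sizeS S0; first by rewrite /block_sum big_nil.
have [[c s0E]|s0_free] := pselect (exists c, s0.2 = \sum_(s <- S) c s *: s.2).
  rewrite (block_sum_merge (c := c)) //; apply: IH; first by rewrite size_map.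
  move=> phi phiE h; have [hZ hL] := elementary_tensor_form h phiE.
  by rewrite -(block_sum_merge (c := c)) //; apply: S0.
have head0 phi : elementary phi -> \sum_(q <- s0.1) phi q = 0.
  by move=> phiE; apply: block_head_elim s0_free => // h; apply: S0.
rewrite /block_sum big_cons elementary_detects // add0r.
apply: IH => // phi phiE h; have := S0 phi phiE h.
by rewrite /block_sum big_cons -mulr_suml head0 // mul0r add0r.
Qed.

End BlockElimination.

Section MultilinearLift.
Variable K : fieldType.

Lemma block_sum_singletons (W : lmodType K) (Q : Type) (F : Q -> W -> K)
    (u : seq (Q * W)) :
  block_sum F [seq ([:: p.1], p.2) | p <- u] = \sum_(p <- u) F p.1 p.2.
Proof. by rewrite /block_sum big_map; apply: eq_bigr => p _; rewrite big_seq1. Qed.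

Lemma sum_cat_negated (W Q : Type) (neg : Q -> Q) (F : Q -> W -> K) :
  (forall q w, F (neg q) w = - F q w) -> forall s t : seq (Q * W),
  \sum_(p <- s ++ [seq (neg p.1, p.2) | p <- t]) F p.1 p.2
  = \sum_(p <- s) F p.1 p.2 - \sum_(p <- t) F p.1 p.2.
Proof.
by move=> FN s t; rewrite big_cat big_map -sumrN; congr (_ + _); apply: eq_bigr => p _; apply: FN.
Qed.

Lemma bilinear_sum_eq0 (V W : lmodType K) (u : seq (V * W)) :
  (forall (f : {linear V -> K^o}) (h : {linear W -> K^o}),
     \sum_(p <- u) f p.1 * h p.2 = 0) ->
  forall F : V -> W -> K, bilinear_for *%R *%R F -> \sum_(p <- u) F p.1 p.2 = 0.
Proof.
move=> u0 F [FL1 FL2]; rewrite -block_sum_singletons.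
apply: (@block_sum_eq0 K W V *:%R (fun phi => exists f : {linear V -> K^o}, phi = f)
                        (linear_for *%R)) => //.
- by move=> _ [f ->] k v; rewrite linearZ.
- move=> psi psiL l l0; rewrite -lform_sum //.
  suff -> : \sum_(q <- l) q = 0 by rewrite lform0.
  by apply: lform_separates => f; rewrite linear_sum; apply: l0; exists f.
- by move=> _ [f ->] h; rewrite block_sum_singletons.
- by move=> k v w; exact: lformZ (FL1 w) k v.
Qed.

Definition trilinear (U V W : lmodType K) (F : U -> V -> W -> K) :=
  [/\ forall b c, linear_for *%R (fun a => F a b c),
      forall a c, linear_for *%R (fun b => F a b c)
    & forall a b, linear_for *%R (F a b)].

Lemma trilinear_sum_eq0 (U V W : lmodType K) (u : seq (U * V * W)) :
  (forall (f : {linear U -> K^o}) (g : {linear V -> K^o}) (h : {linear W -> K^o}),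
     \sum_(p <- u) f p.1.1 * g p.1.2 * h p.2 = 0) ->
  forall F, trilinear F -> \sum_(p <- u) F p.1.1 p.1.2 p.2 = 0.
Proof.
move=> u0 F [FL1 FL2 FL3].
rewrite -(block_sum_singletons (fun q w => F q.1 q.2 w)).
apply: (@block_sum_eq0 K W (U * V) (fun k q => (k *: q.1, q.2))
  (fun phi => exists (f : {linear U -> K^o}) (g : {linear V -> K^o}),
                phi = fun q => f q.1 * g q.2)
  (fun psi => bilinear_for *%R *%R (fun a b => psi (a, b)))) => //.
- by move=> _ [f [g ->]] k q; rewrite linearZ mulrA.
- move=> psi psiL l l0; rewrite (eq_bigr (fun q => psi (q.1, q.2))) => [|[] //].
  apply: bilinear_sum_eq0 psiL => f g; apply: l0.
  by exists f, g.
- by move=> _ [f [g ->]] h; rewrite block_sum_singletons.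
- by move=> w; split=> [b|a]; [apply: FL1 | apply: FL2].
- by move=> k q w; exact: lformZ (FL1 _ _) k q.1.
Qed.

Lemma teq_bilinear (V W : lmodType K) (s t : tensor2 V W) :
  teq s t -> forall F : V -> W -> K, bilinear_for *%R *%R F ->
  \sum_(p <- s) F p.1 p.2 = \sum_(p <- t) F p.1 p.2.
Proof.
move=> st F FL; have negE (G : V -> W -> K) : (forall w, linear_for *%R (G^~ w)) ->
    forall v w, G (- v) w = - G v w.
  by move=> GL v w; rewrite -[- v]scaleN1r (lformZ (GL w)) mulN1r.
apply/eqP; rewrite -subr_eq0 -(sum_cat_negated (negE F FL.1)).
apply/eqP/bilinear_sum_eq0 => // f h.
have fhL w : linear_for *%R (fun v => f v * h w).
  by move=> a x y; rewrite linearP mulrDl mulrA.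
by rewrite (sum_cat_negated (negE _ fhL)) st subrr.
Qed.

Lemma teq3_trilinear (U V W : lmodType K) (s t : tensor3 U V W) :
  teq3 s t -> forall F, trilinear F ->
  \sum_(p <- s) F p.1.1 p.1.2 p.2 = \sum_(p <- t) F p.1.1 p.1.2 p.2.
Proof.
move=> st F [FL1 FL2 FL3]; pose neg (q : U * V) := (- q.1, q.2).
have negE (G : U -> V -> W -> K) : (forall b c, linear_for *%R (fun a => G a b c)) ->
    forall q w, G (neg q).1 (neg q).2 w = - G q.1 q.2 w.
  by move=> GL [a b] w; rewrite /neg /= -[- a]scaleN1r (lformZ (GL _ _)) mulN1r.
apply/eqP; rewrite -subr_eq0 -(sum_cat_negated (negE F FL1)).
apply/eqP/trilinear_sum_eq0 => // f g h.
have fghL b c : linear_for *%R (fun a => f a * g b * h c).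
  by move=> k x y; rewrite linearP !mulrDl !mulrA.
by rewrite (sum_cat_negated (negE _ fghL)) st subrr.
Qed.
End MultilinearLift.

Section HopfAlgebra.
Variables (K : fieldType) (A : algType K) (H : hopf_structure A).

Lemma cop_bilinear_sum (F : A -> A -> K) : bilinear_for *%R *%R F ->
  linear_for *%R (fun x => \sum_(p <- cop H x) F p.1 p.2).
Proof.
move=> FL a x y; rewrite (teq_bilinear (cop_linear H a x y) FL) big_cat big_map mulr_sumr.
by congr (_ + _); apply: eq_bigr => p _; exact: lformZ (FL.1 _) a p.1.
Qed.

Lemma coassoc_trilinear (F : A -> A -> A -> K) : trilinear F -> forall x,
  \sum_(p <- cop H x) \sum_(q <- cop H p.1) F q.1 q.2 p.2
  = \sum_(p <- cop H x) \sum_(q <- cop H p.2) F p.1 q.1 q.2.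
Proof. by move=> FL x; have := teq3_trilinear (coassoc H x) FL; rewrite !big_allpairs_dep. Qed.

Lemma counitr_lform (f : A -> K) : linear_for *%R f -> forall x,
  \sum_(p <- cop H x) cnt H p.2 * f p.1 = f x.
Proof.
move=> fL x; rewrite -[in RHS](counitr H x) (lform_sum fL).
by apply: eq_bigr => p _; rewrite (lformZ fL).
Qed.

Lemma antipoder_lform (f : A -> K) : linear_for *%R f -> forall x,
  \sum_(p <- cop H x) f (p.1 * ant H p.2) = cnt H x * f 1.
Proof. by move=> fL x; rewrite -(lform_sum fL) antr (lformZ fL). Qed.

Lemma antipodel_lform (f : A -> K) : linear_for *%R f -> forall a x,
  \sum_(p <- cop H x) f (a * (ant H p.1 * p.2)) = cnt H x * f a.
Proof. by move=> fL a x; rewrite -(lform_sum fL) -mulr_sumr antl -scalerAr mulr1 (lformZ fL). Qed.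

End HopfAlgebra.

Section CocommutingMorphisms.
Variables (K : fieldType) (A : algType K) (H : hopf_structure A) (B C : algType K).
Variables (Phi : {lrmorphism A -> B}) (Psi : {lrmorphism A -> C}).

Definition cocommute :=
  forall y (f : {linear C -> K^o}) (g : {linear B -> K^o}),
    \sum_(p <- cop H y) f (Psi p.1) * g (Phi p.2)
    = \sum_(p <- cop H y) f (Psi p.2) * g (Phi p.1).

Definition ad_trivial :=
  forall x (f : {linear B -> K^o}) (g : {linear C -> K^o}),
    \sum_(p <- cop H x) \sum_(q <- cop H p.1) f (Phi (q.1 * ant H p.2)) * g (Psi q.2)
    = f 1 * g (Psi x).

Lemma ad_trivial_of_cocommute : cocommute -> ad_trivial.
Proof.
move=> cocomm x f g.
have flip p : \sum_(q <- cop H p.1) f (Phi (q.1 * ant H p.2)) * g (Psi q.2)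
            = \sum_(q <- cop H p.1) g (Psi q.1) * f (Phi (q.2 * ant H p.2)).
  have fL : linear_for *%R (fun b => f (b * Phi (ant H p.2))).
    by move=> k b b'; rewrite mulrDl -scalerAl linearP.
  have /= flipped := cocomm p.1 g (lform_of fL).
  under eq_bigr do rewrite rmorphM mulrC.
  by under [RHS]eq_bigr do rewrite rmorphM; rewrite flipped.
pose T a b c := g (Psi a) * f (Phi (b * ant H c)).
have TL : trilinear T.
  split=> [b c k y z|a c k y z|a b k y z]; rewrite /T.
  - by rewrite !linearP mulrDl mulrA.
  - by rewrite mulrDl -scalerAl !linearP mulrDr mulrCA.
  - by rewrite ant_linear mulrDr -scalerAr !linearP mulrDr mulrCA.
rewrite (eq_bigr _ (fun p _ => flip p)) (coassoc_trilinear H TL) /T.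
under eq_bigr do rewrite -mulr_sumr (antipoder_lform H (lform_comp f Phi)) rmorph1.
under eq_bigr do rewrite mulrA (mulrC (g _)).
by rewrite -mulr_suml (counitr_lform H (lform_comp g Psi)) mulrC.
Qed.

Lemma ad_expansion_trilinear (f : {linear C -> K^o}) (g : {linear B -> K^o}) :
  trilinear (fun X c d =>
    \sum_(q <- cop H X) g (Phi (q.1 * ant H c) * Phi d) * f (Psi q.2)).
Proof.
split=> [c d|X d|X c].
- have gL : linear_for *%R (fun a => g (Phi (a * ant H c) * Phi d)).
    by move=> k a a'; rewrite mulrDl -scalerAl !linearP mulrDl -scalerAl linearP.
  by move=> k a a'; rewrite (cop_bilinear_sum H (lform_mul_bilinear gL (lform_comp f Psi))).
- move=> k c c'; rewrite mulr_sumr -big_split; apply: eq_bigr => q _ /=.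
  by rewrite ant_linear mulrDr -scalerAr !linearP mulrDl -scalerAl !linearP mulrDl mulrA.
- move=> k d d'; rewrite mulr_sumr -big_split; apply: eq_bigr => q _ /=.
  by rewrite !linearP mulrDr -scalerAr !linearP mulrDl mulrA.
Qed.

Lemma cocommute_of_ad_trivial : ad_trivial -> cocommute.
Proof.
move=> adT y f g.
have expand p : f (Psi p.1) * g (Phi p.2) = \sum_(r <- cop H p.1)
    \sum_(q <- cop H r.1) g (Phi (q.1 * ant H r.2) * Phi p.2) * f (Psi q.2).
  have gL : linear_for *%R (fun b => g (b * Phi p.2)).
    by move=> k b b'; rewrite mulrDl -scalerAl linearP.
  by have /= -> := adT p.1 (lform_of gL) f; rewrite mul1r mulrC.
have collapse a z :
    \sum_(r <- cop H z) g (Phi (a * ant H r.1) * Phi r.2) = cnt H z * g (Phi a).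
  by under eq_bigr do rewrite -rmorphM -mulrA; rewrite (antipodel_lform H (lform_comp g Phi)).
rewrite (eq_bigr _ (fun p _ => expand p)) (coassoc_trilinear H (ad_expansion_trilinear f g)).
under eq_bigr => p _ do rewrite exchange_big /=.
under eq_bigr => p _ do under eq_bigr => q _ do rewrite -mulr_suml collapse -mulrA.
under eq_bigr do rewrite -mulr_sumr.
have gfL := lform_mul_bilinear (lform_comp g Phi) (lform_comp f Psi).
rewrite (counitr_lform H (cop_bilinear_sum H gfL)).
by apply: eq_bigr => p _; rewrite mulrC.
Qed.

Lemma cocommuteE :
  (forall x, teq (tmap Psi Phi (cop H x)) (tmap Psi Phi (tflip (cop H x)))) <-> cocommute.
Proof.
by split=> coc y f g; have := coc y f g; rewrite /tmap /tflip !big_map.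
Qed.

Lemma ad_trivialE : (forall x, teq (tmap Phi Psi (ad H x)) [:: (1, Psi x)]) <-> ad_trivial.
Proof.
by split=> adT x f g; have := adT x f g; rewrite /tmap /ad big_seq1 big_map big_allpairs_dep.
Qed.

End CocommutingMorphisms.

Unset Implicit Arguments.
Theorem proposition3p9 (K : fieldType) (A : algType K) (H : hopf_structure A)
  (B C : algType K) (Phi : {lrmorphism A -> B}) (Psi : {lrmorphism A -> C})
  (Phi_surj : forall b : B, exists a : A, Phi a = b)
  (Psi_surj : forall c : C, exists a : A, Psi a = c) :
  (forall x : A,
     teq (tmap Psi Phi (cop H x)) (tmap Psi Phi (tflip (cop H x))))
  <->
  (forall x : A, teq (tmap Phi Psi (ad H x)) [:: (1, Psi x)]).
Proof.
split.
- by move=> /cocommuteE/ad_trivial_of_cocommute/ad_trivialE.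
- by move=> /ad_trivialE/cocommute_of_ad_trivial/cocommuteE.
Qed.
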